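(* Let $\Bbbk$ be a field, $n\ge2$, $q\in\Bbbk$ a primitive $n$-th root of unity, $T_n(q)$ the Taft algebra and $A$ a unital associative $\Bbbk$-algebra. Let $\cdot:T_n(q)\otimes A\to A$ be a partial action of $T_n(q)$ on $A$ with $g\cdot1_A=0$. Then for all $a\in A$ and $0\le i,j\le n-1$, $$g^ix^j\cdot a=q^{-ij}\sum_{k=0}^{j}(-1)^kq^{-\frac{k(k-1)}{2}}\binom{j}{k}_{q^{-1}}(x\cdot1_A)^{j-k}(g^{i+k}\cdot a)(x\cdot1_A)^k.$$
   Context: The Taft algebra $T_n(q)$ is the Hopf algebra generated by $g,x$ with relations $g^n=1$, $x^n=0$, $xg=qgx$, basis $\{g^ix^j:0\le i,j<n\}$, $g$ group-like, $\Delta(x)=x\otimes1+g\otimes x$, $\varepsilon(x)=0$; exponents of $g$ are read modulo $n$. A partial action of a bialgebra $H$ on $A$ is a linear map $\cdot:H\otimes A\to A$ with $1_H\cdot a=a$, $h\cdot(ab)=(h_1\cdot a)(h_2\cdot b)$, $h\cdot(k\cdot a)=(h_1\cdot1_A)(h_2k\cdot a)$. $q$-binomials: $\binom{0}{0}_p=1$, $\binom{N}{m}_p=0$ if $m>N$ or $m<0$, and $\binom{N}{m}_p=\binom{N-1}{m-1}_p+p^m\binom{N-1}{m}_p$ for $N\ge1$, $0\le m\le N$. *)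

From HB Require Import structures.
From mathcomp Require Import all_boot all_order all_algebra.
Set Implicit Arguments. Unset Strict Implicit. Unset Printing Implicit Defensive.
Import GRing.Theory.
Local Open Scope ring_scope.

Fixpoint qbinom (K : nzRingType) (p : K) (N m : nat) {struct N} : K :=
  match N with
  | 0%N => if m == 0%N then 1 else 0
  | N'.+1 =>
      if (m <= N)%N then
        (if m is m'.+1 then qbinom p N' m' else 0) + p ^+ m * qbinom p N' m
      else 0
  end.

(* A linear map  T_n(q) (x) A -> A  is encoded by its values on the basis
   {g^i x^j : 0 <= i,j < n}:  act i j a  =  (g^i x^j) . a.
   Exponents of g are reduced modulo n in all formulas below.

   Taft algebra structure used (derived from the defining relations):
   - product:  (g^i x^l)(g^i' x^j') = q^(l i') g^(i+i') x^(l+j')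
               (and 0 when l + j' >= n, since x^n = 0);
   - coproduct: Delta(g^i x^j) = sum_(k=0..j) binom(j,k)_q g^(i+k) x^(j-k) (x) g^i x^k
               (from Delta(g)=g(x)g, Delta(x)=x(x)1+g(x)x, (x(x)1)(g(x)x) = q (g(x)x)(x(x)1)). *)
Definition is_taft_partial_action (K : fieldType) (n : nat) (q : K)
  (A : algType K) (act : nat -> nat -> A -> A) : Prop :=
  [/\ (forall i j (c : K) (a b : A), (i < n)%N -> (j < n)%N ->
         act i j (c *: a + b) = c *: act i j a + act i j b),
      (forall a : A, act 0%N 0%N a = a),
      (* h . (ab) = (h_1 . a)(h_2 . b) *)
      (forall i j (a b : A), (i < n)%N -> (j < n)%N ->
         act i j (a * b) =
         \sum_(k < j.+1) qbinom q j k *: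
            (act ((i + k) %% n)%N (j - k)%N a * act i k b)) &
      (* h . (k . a) = (h_1 . 1_A)(h_2 k . a) *)
      (forall i j i' j' (a : A), (i < n)%N -> (j < n)%N -> (i' < n)%N -> (j' < n)%N ->
         act i j (act i' j' a) =
         \sum_(l < j.+1) qbinom q j l *:
            (act ((i + l) %% n)%N (j - l)%N 1 *
             (if (l + j' < n)%N
              then q ^+ (l * i')%N *: act ((i + i') %% n)%N (l + j')%N a
              else 0)))].

(* Write y = x.1 and z = g^-1 x.1, where g^-1 = g^(n-1).  From g.1 = 0 the
   composition axiom gives g^-1.1 = 0, hence multiplicativity gives
   g^-1 x.b = b z, and composing g^-1 x with g gives z = -q y.  Composing
   g^-1 x with g^(i+1) x^j then yields the recursion
     g^i x^(j+1).a = q^-i (y (g^i x^j.a) - (g^(i+1) x^j.a) y),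
   which the right-hand side also satisfies, by the q-Pascal rule for the
   Gaussian binomials in q^-1; induction on j concludes. *)

From HB Require Import structures.
From mathcomp Require Import all_boot all_order all_algebra.
From mathcomp Require Import zify ring.
Set Implicit Arguments.
Unset Strict Implicit.
Unset Printing Implicit Defensive.
Import GRing.Theory.
Local Open Scope ring_scope.

Section QBinomial.
Variables (R : nzRingType) (p : R).

Lemma qbinom0 j : qbinom p j 0 = 1.
Proof. by elim: j => [|j IHj] //=; rewrite add0r mul1r IHj. Qed.

Lemma qbinom_small j k : (j < k)%N -> qbinom p j k = 0.
Proof. by case: j => [|j] /=; [case: k | rewrite ltnNge => /negbTE ->]. Qed.

Lemma qbinomS j k : qbinom p j.+1 k.+1 = qbinom p j k + p ^+ k.+1 * qbinom p j k.+1.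
Proof.
rewrite /=; case: leqP => // lt_jk.
by rewrite !qbinom_small ?mulr0 ?addr0 // ltnW.
Qed.

End QBinomial.

Lemma qbinomSr (R : comNzRingType) (p : R) j k :
  qbinom p j.+1 k.+1 = qbinom p j k.+1 + p ^+ (j - k) * qbinom p j k.
Proof.
elim: j k => [|j IHj] [|k].
- by rewrite qbinomS !qbinom0 qbinom_small // mulr0 addr0 add0r mulr1.
- by rewrite /= mulr0 addr0.
- have := IHj 0%N; rewrite [LHS]qbinomS !qbinom0 subn0 => IHj0.
  by rewrite [LHS]qbinomS (IHj 0%N) !qbinom0 !subn0 mulrDr addrA IHj0 [p ^+ j.+1]exprS mulrA.
rewrite subSS [in X in _ = X](qbinomS p j k.+1) [in X in _ = X](qbinomS p j k).
rewrite [LHS]qbinomS !IHj.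
have [lt_kj | le_jk] := ltnP k j.
  have -> : (j - k = (j - k.+1).+1)%N by lia.
  rewrite !exprS; ring.
by rewrite (@qbinom_small _ _ j k.+1) ?mulr0 ?ltnS //; ring.
Qed.

Section TaftCoefficients.
Variables (K : fieldType) (q : K).

Definition taft_coef (j k : nat) : K := (-1) ^+ k * q ^- 'C(k, 2) * qbinom q^-1 j k.

Lemma taft_coef0 j : taft_coef j 0 = 1.
Proof. by rewrite /taft_coef qbinom0 bin0n invr1 !mulr1. Qed.

Lemma taft_coef_small j k : (j < k)%N -> taft_coef j k = 0.
Proof. by move=> lt_jk; rewrite /taft_coef qbinom_small ?mulr0. Qed.

Lemma taft_coefS j k : taft_coef j.+1 k.+1 = taft_coef j k.+1 - q ^- j * taft_coef j k.
Proof.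
rewrite /taft_coef qbinomSr mulrDr; congr (_ + _).
have [le_kj | lt_jk] := leqP k j; last by rewrite !qbinom_small ?mulr0 ?oppr0.
have q_exp : q ^- 'C(k.+1, 2) * q^-1 ^+ (j - k) = q ^- j * q ^- 'C(k, 2).
  by rewrite binS bin1 exprVn -!invfM -!exprD; congr (_ ^-1); congr (_ ^+ _); lia.
by rewrite mulrA -[_ * q^-1 ^+ _]mulrA q_exp exprS; ring.
Qed.

Lemma sum_taft_coefS (V : lmodType K) (X : nat -> V) j :
  \sum_(k < j.+2) taft_coef j.+1 k *: X k =
  \sum_(k < j.+1) taft_coef j k *: X k - q ^- j *: \sum_(k < j.+1) taft_coef j k *: X k.+1.
Proof.
rewrite big_ord_recl.
under eq_bigr => k _ do rewrite lift0 taft_coefS scalerBl -[(q ^- j * _) *: _]scalerA.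
rewrite sumrB -scaler_sumr addrA; congr (_ - _).
rewrite big_ord_recr /= (taft_coef_small (ltnSn j)) scale0r addr0.
by rewrite [RHS]big_ord_recl !taft_coef0.
Qed.

End TaftCoefficients.

Section TaftRhs.
Variables (K : fieldType) (q : K) (A : algType K) (y : A) (G : nat -> A).

Definition taft_rhs (i j : nat) : A :=
  q ^- (i * j) *: \sum_(k < j.+1) taft_coef q j k *: (y ^+ (j - k) * G (i + k)%N * y ^+ k).

Lemma taft_rhsS i j :
  taft_rhs i j.+1 = q ^- i *: (y * taft_rhs i j - taft_rhs i.+1 j * y).
Proof.
pose X k := y ^+ (j.+1 - k) * G (i + k)%N * y ^+ k.
have mul_y_l : y * \sum_(k < j.+1) taft_coef q j k *: (y ^+ (j - k) * G (i + k)%N * y ^+ k)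
    = \sum_(k < j.+1) taft_coef q j k *: X k.
  rewrite mulr_sumr; apply: eq_bigr => k _.
  by rewrite /X -scalerAr !mulrA -exprS subSn // -ltnS.
have mul_y_r : (\sum_(k < j.+1) taft_coef q j k *: (y ^+ (j - k) * G (i.+1 + k)%N * y ^+ k)) * y
    = \sum_(k < j.+1) taft_coef q j k *: X k.+1.
  rewrite mulr_suml; apply: eq_bigr => k _.
  by rewrite /X -scalerAl -[_ * y ^+ k * y]mulrA -exprSr addSnnS subSS.
have -> : taft_rhs i j.+1 = q ^- (i * j.+1) *: \sum_(k < j.+2) taft_coef q j.+1 k *: X k by [].
rewrite /taft_rhs -scalerAr -scalerAl mul_y_l mul_y_r sum_taft_coefS.
rewrite !scalerBr !scalerA -!invfM -!exprD.
by congr ((q ^+ _)^-1 *: _ - (q ^+ _)^-1 *: _); lia.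
Qed.

Lemma taft_rhs_modn n i j :
  q ^+ n = 1 -> (forall m, G (m %% n) = G m) -> taft_rhs (i %% n) j = taft_rhs i j.
Proof.
move=> qn1 G_mod; rewrite /taft_rhs !exprM expr_mod //; congr (_ *: _).
by apply: eq_bigr => k _; rewrite -G_mod modnDml G_mod.
Qed.

End TaftRhs.

Section TaftPartialAction.
Variables (K : fieldType) (n : nat) (q : K) (A : algType K) (act : nat -> nat -> A -> A).
Hypotheses (n_gt1 : (1 < n)%N) (q_prim : n.-primitive_root q).
Hypotheses (act_partial : is_taft_partial_action n q act) (g_1 : act 1 0 1 = 0).

Let n_gt0 : (0 < n)%N := ltnW n_gt1.
Let predn_lt : (n.-1 < n)%N.
Proof. by rewrite ltn_predL. Qed.

Let modn_lt m : (m %% n < n)%N.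
Proof. by rewrite ltn_mod. Qed.

Let predn_modn : (n.-1 %% n = n.-1)%N.
Proof. exact: modn_small. Qed.

Let predn1_modn : ((n.-1 + 1) %% n = 0)%N.
Proof. by rewrite addn1 prednK ?modnn. Qed.

Let predn_modnS i : (i < n)%N -> ((n.-1 + (i + 1) %% n) %% n = i)%N.
Proof.
by move=> lt_in; rewrite modnDmr addnCA addn1 prednK // modnDr modn_small.
Qed.

Lemma taft_act0 i j : (i < n)%N -> (j < n)%N -> act i j 0 = 0.
Proof.
case: act_partial => act_lin _ _ _ lt_in lt_jn.
by have := act_lin i j (-1) 0 0 lt_in lt_jn; rewrite scaler0 addr0 scaleN1r addNr.
Qed.

Lemma act_ginv1 : act n.-1 0 1 = 0.
Proof.
case: act_partial => _ act_1 _ act_comp.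
have := act_comp n.-1 0 1 0 1 predn_lt n_gt0 n_gt1 n_gt0.
rewrite g_1 taft_act0 // big_ord1 /= addn0 predn_modn predn1_modn n_gt0 act_1 mul0n.
by rewrite expr0 !scale1r mulr1.
Qed.

Lemma act_ginvx b : act n.-1 1 b = b * act n.-1 1 1.
Proof.
case: act_partial => _ act_1 act_mul _.
have := act_mul n.-1 1 b 1 predn_lt n_gt1.
rewrite mulr1 !big_ord_recl big_ord0 /= /bump /= addr0 addn0 predn_modn predn1_modn.
by rewrite act_ginv1 mulr0 scaler0 add0r !addn0 subnn mulr0 addr0 scale1r act_1.
Qed.

Lemma act_ginvx_act i j b : (i < n)%N -> (j < n)%N ->
  act n.-1 1 (act ((i + 1) %% n)%N j b) =
  act n.-1 1 1 * act i j b + (if (j.+1 < n)%N then q ^+ i.+1 *: act i j.+1 b else 0).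
Proof.
case: act_partial => _ act_1 _ act_comp lt_in lt_jn.
have := act_comp n.-1 1 ((i + 1) %% n)%N j b predn_lt n_gt1 (modn_lt _) lt_jn.
rewrite !big_ord_recl big_ord0 /= /bump /= addr0 addn0 predn_modn predn1_modn predn_modnS //.
rewrite !addn0 !add0n subn0 subnn mul0n mul1n expr0 mulr0 mulr1 addr0 add0r !scale1r.
by rewrite lt_jn act_1 mul1r prim_expr_mod // add1n addn1.
Qed.

Let q_neq0 : q != 0.
Proof. by rewrite (prim_root_eq0 q_prim) -lt0n. Qed.

Local Notation y := (act 0 1 1).

Lemma act_ginvx1 : act n.-1 1 1 = - (q *: y).
Proof.
case: act_partial => _ act_1 _ _.
have := act_ginvx_act 1 n_gt0 n_gt0.
rewrite add0n modn_small // g_1 taft_act0 // n_gt1 act_1 mulr1 expr1.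
by move/eqP; rewrite eq_sym addr_eq0 => /eqP.
Qed.

Lemma act_xS i j a : (i < n)%N -> (j.+1 < n)%N ->
  act i j.+1 a = q ^- i *: (y * act i j a - act ((i + 1) %% n)%N j a * y).
Proof.
move=> lt_in lt_jn; have := act_ginvx_act a lt_in (ltnW lt_jn).
rewrite lt_jn act_ginvx act_ginvx1 mulrN mulNr -scalerAl -scalerAr addrC.
move/eqP; rewrite -subr_eq opprK addrC -scalerBr => /eqP act_jS.
apply: (scalerI (expf_neq0 i.+1 q_neq0)).
by rewrite -act_jS scalerA exprS -mulrA mulfV ?expf_neq0 ?mulr1.
Qed.

Lemma act_taft_rhs a j : (j < n)%N -> forall i, (i < n)%N ->
  act i j a = taft_rhs q y (fun m => act (m %% n)%N 0 a) i j.
Proof.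
elim: j => [_ i lt_in | j IHj lt_jn i lt_in].
  rewrite /taft_rhs big_ord1 taft_coef0 muln0 invr1 !scale1r subnn expr0 mul1r mulr1.
  by rewrite addn0 modn_small.
have lt_jn' := ltnW lt_jn.
rewrite act_xS // !IHj // taft_rhs_modn ?addn1 -?taft_rhsS //.
  exact: prim_expr_order.
by move=> m; rewrite modn_mod.
Qed.

End TaftPartialAction.

Theorem proposition3p3 (K : fieldType) (n : nat) (q : K) (A : algType K)
  (act : nat -> nat -> A -> A) :
  (2 <= n)%N ->
  n.-primitive_root q ->
  is_taft_partial_action n q act ->
  act 1%N 0%N 1 = 0 ->
  forall (a : A) (i j : nat), (i < n)%N -> (j < n)%N ->
    act i j a =
    q ^- (i * j)%N *:
      \sum_(k < j.+1)
        ((-1) ^+ k * q ^- ((k * k.-1)./2)%N * qbinom q^-1 j k) *: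
          (act 0%N 1%N 1 ^+ (j - k)%N * act ((i + k) %% n)%N 0%N a * act 0%N 1%N 1 ^+ k).
Proof.
move=> n_gt1 q_prim act_partial g_1 a i j lt_in lt_jn.
rewrite (act_taft_rhs n_gt1 q_prim act_partial g_1 a lt_jn lt_in) /taft_rhs.
by under eq_bigr do rewrite /taft_coef bin2.
Qed.
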